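(* InpRS achieves $\epsilon$-LDP and guarantees that $\| \mathcal{C}^\beta(t)- {\mathcal{C}^{\beta}(t^* )}\|_1 = \tilde{O}\Big(\frac{2^{(d+k)/2}}{\epsilon\sqrt{N}}\Big)$ with constant probability.
   Context: There are $N$ users; user $i$ holds a vector in $\{0,1\}^d$, represented as an indicator vector $t_i\in\{0,1\}^{2^d}$ with a single 1 at index $j_i$, and $t=\sum_{i=1}^N t_i/N$ is the full (normalized) distribution. A mechanism $F$ is $\epsilon$-LDP if for all pairs of such indicator inputs $t_i,t'_i$ and every output $R$, $\Pr[F(t_i)=R]\le e^{\epsilon}\Pr[F(t'_i)=R]$. For $\beta\in\{0,1\}^d$ with $k$ ones, the $k$-way marginal operator is $\mathcal{C}^\beta(t)[\gamma]=\sum_{\eta:\eta\wedge\beta=\gamma} t[\eta]$ for $\gamma$ ranging over the $2^k$ values with support inside $\beta$. The algorithm InpRS (parallel randomized response on input): each user $i$ perturbs its value $t_i[\ell]$ at every index $\ell\in[2^d]$ independently using randomized response with privacy parameter $\epsilon/2$ (report the true bit with probability $p_r=e^{\epsilon/2}/(1+e^{\epsilon/2})$, otherwise the flipped bit) and releases all pairs $\langle \ell, b^*_{i,\ell}\rangle$. The aggregator debiases each report to an unbiased estimate (observed fraction $F$ mapped to $(F+p_r-1)/(2p_r-1)$), averages over users to obtain a reconstructed distribution $t^*$, and answers marginal $\beta$ by $\mathcal{C}^\beta(t^* )$. $\tilde{O}$ suppresses factors logarithmic in $N,d,k,\epsilon$; the number of users is assumed large relative to the number of cells, i.e. $N$ at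 least (up to log factors) proportional to $2^d$, and $\epsilon$ is bounded by a constant (the proof uses $0<\epsilon<2$). *)

From HB Require Import structures.
From mathcomp Require Import all_boot all_order all_algebra.
From mathcomp Require Import all_classical all_reals all_analysis.
Set Implicit Arguments. Unset Strict Implicit. Unset Printing Implicit Defensive.
Import Order.TTheory GRing.Theory Num.Theory.
Local Open Scope ring_scope.

Section InpRS.
Variable R : realType.

Definition cell (d : nat) := {ffun 'I_d -> bool}.

(* Randomized response with parameter eps/2: prob. of reporting the true bit. *)
Definition p_r (eps : R) : R := expR (eps / 2) / (1 + expR (eps / 2)).

Definition indic (d : nat) (j : cell d) : {ffun cell d -> bool} :=
  [ffun l => l == j].

Definition inprs_prob (d : nat) (eps : R) (j : cell d) (b : {ffun cell d -> bool}) : R :=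
  \prod_(l : cell d) (if b l == indic j l then p_r eps else 1 - p_r eps).

Definition is_LDP (In Out : finType) (eps : R) (F : In -> Out -> R) : Prop :=
  forall (x x' : In) (o : Out), F x o <= expR eps * F x' o.

Definition joint_prob (d N : nat) (eps : R) (js : {ffun 'I_N -> cell d})
  (B : {ffun 'I_N -> {ffun cell d -> bool}}) : R :=
  \prod_(i < N) inprs_prob eps (js i) (B i).

Definition Pr (d N : nat) (eps : R) (js : {ffun 'I_N -> cell d})
  (E : pred {ffun 'I_N -> {ffun cell d -> bool}}) : R :=
  \sum_(B | E B) joint_prob eps js B.

Definition true_dist (d N : nat) (js : {ffun 'I_N -> cell d}) : {ffun cell d -> R} :=
  [ffun eta => (\sum_(i < N) (indic (js i) eta)%:R) / N%:R].

(* Aggregator's reconstruction t^* (debiased average of the reports). *)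
Definition recon (d N : nat) (eps : R) (B : {ffun 'I_N -> {ffun cell d -> bool}})
  : {ffun cell d -> R} :=
  [ffun eta => (\sum_(i < N) (((B i eta)%:R + p_r eps - 1) / (2 * p_r eps - 1)))
               / N%:R].

Definition cand (d : nat) (x y : cell d) : cell d := [ffun a => x a && y a].

Definition supp_in (d : nat) (beta gamma : cell d) : bool :=
  [forall a, gamma a ==> beta a].

Definition marginal (d : nat) (beta : cell d) (t : {ffun cell d -> R}) (gamma : cell d) : R :=
  \sum_(eta : cell d | cand eta beta == gamma) t eta.

Definition marg_L1 (d : nat) (beta : cell d) (t t' : {ffun cell d -> R}) : R :=
  \sum_(gamma : cell d | supp_in beta gamma)
     `|marginal beta t gamma - marginal beta t' gamma|.

Definition weight (d : nat) (beta : cell d) : nat := #|[set a | beta a]|.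

(* Polylogarithmic factor in N, d, k, eps (the factors suppressed by O~). *)
Definition polylog (N d k : nat) (eps : R) : R :=
  2 + ln N%:R + ln d.+1%:R + ln k.+1%:R + `|ln eps|.

End InpRS.

From Pilot Require Import Defs.
From HB Require Import structures.
From mathcomp Require Import all_boot all_order all_algebra.
From mathcomp Require Import all_classical all_reals all_analysis.
From mathcomp Require Import ring lra.
Set Implicit Arguments. Unset Strict Implicit. Unset Printing Implicit Defensive.
Import Order.TTheory GRing.Theory Num.Theory.
Local Open Scope ring_scope.

(* Privacy: each of the 2^d reported bits is randomized response with ratio
   e^(eps/2), and the indicator vectors of two inputs differ in at most two
   cells, so the output probabilities differ by a factor at most e^eps.
   Utility: each debiased cell estimate is unbiased with variance
   V <= 8 / eps^2 and the bits are independent, so the expected squared L2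
   error of the marginal is at most V 2^d / N (every cell feeds exactly one
   entry of the marginal). By Markov, with probability 1/2 this squared error
   is at most 16 2^d / (eps^2 N), and the L1 norm of a vector with 2^k entries
   is at most sqrt(2^k) times its L2 norm. *)

Section ProductOfBits.
Variables (R : comPzRingType) (I J : finType).
Local Notation bits := {ffun I -> {ffun J -> bool}}.
Implicit Types (B : bits) (p s : I * J).

Lemma sum_prod_bits (F : I * J -> bool -> R) :
  \sum_(B : bits) \prod_(p : I * J) F p (B p.1 p.2)
  = \prod_(p : I * J) (F p true + F p false).
Proof.
transitivity (\sum_(B : bits) \prod_i \prod_j F (i, j) (B i j)).
  by apply: eq_bigr => B _; rewrite pair_bigA; apply: eq_bigr => -[i j].
rewrite -(bigA_distr_bigA (fun i (f : {ffun J -> bool}) => \prod_j F (i, j) (f j))).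
under eq_bigr => i _ do rewrite -(bigA_distr_bigA (fun j (b : bool) => F (i, j) b)).
by rewrite pair_bigA; apply: eq_bigr => -[i j] _; rewrite big_bool.
Qed.

Variable q : I * J -> bool -> R.
Hypothesis q_sum1 : forall p, q p true + q p false = 1.

Definition prod_prob B : R := \prod_(p : I * J) q p (B p.1 p.2).

Lemma expect_prod (phi : I * J -> bool -> R) :
  \sum_(B : bits) prod_prob B * \prod_(p : I * J) phi p (B p.1 p.2)
  = \prod_(p : I * J) (q p true * phi p true + q p false * phi p false).
Proof.
rewrite -(sum_prod_bits (fun p b => q p b * phi p b)).
by apply: eq_bigr => B _; rewrite -big_split.
Qed.

Lemma prod_prob_sum1 : \sum_(B : bits) prod_prob B = 1.
Proof. by rewrite sum_prod_bits big1. Qed.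

Variable x : I * J -> bool -> R.
Hypothesis x_mean0 : forall p, q p true * x p true + q p false * x p false = 0.

Definition second_moment p : R := q p true * x p true ^+ 2 + q p false * x p false ^+ 2.

Lemma expect_cross s s' :
  \sum_(B : bits) prod_prob B * (x s (B s.1 s.2) * x s' (B s'.1 s'.2))
  = if s == s' then second_moment s else 0.
Proof.
pose phi p b := (if p == s then x s b else 1) * (if p == s' then x s' b else 1).
transitivity (\sum_(B : bits) prod_prob B * \prod_(p : I * J) phi p (B p.1 p.2)).
  apply: eq_bigr => B _; rewrite big_split /= -!big_mkcond.
  by rewrite !big_pred1_eq.
rewrite expect_prod (bigD1 s) //= /phi eqxx.
have [<-|_] := eqVneq s s'; last by rewrite !mulr1 x_mean0 mul0r.
rewrite big1 ?mulr1; first by rewrite /second_moment !expr2.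
by move=> p /negbTE ->; rewrite !mulr1 q_sum1.
Qed.

Lemma expect_sq_lincomb (a : I * J -> R) :
  \sum_(B : bits) prod_prob B * (\sum_(p : I * J) a p * x p (B p.1 p.2)) ^+ 2
  = \sum_(p : I * J) a p ^+ 2 * second_moment p.
Proof.
transitivity (\sum_(B : bits) \sum_(s : I * J) \sum_(s' : I * J)
   a s * a s' * (prod_prob B * (x s (B s.1 s.2) * x s' (B s'.1 s'.2)))).
  apply: eq_bigr => B _; rewrite expr2 mulr_suml mulr_sumr.
  apply: eq_bigr => s _; rewrite !mulr_sumr.
  by apply: eq_bigr => s' _; ring.
rewrite exchange_big; apply: eq_bigr => s _; rewrite exchange_big /=.
under eq_bigr => s' _ do rewrite -mulr_sumr expect_cross.
rewrite (bigD1 s) //= eqxx big1 ?addr0; first by rewrite expr2.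
by move=> s' ne; rewrite eq_sym (negbTE ne) mulr0.
Qed.

End ProductOfBits.

Section Inequalities.
Variable R : realFieldType.

Lemma markov_finite (T : finType) (E : pred T) (P X : T -> R) (t : R) :
  0 < t -> (forall u, 0 <= P u) -> (forall u, 0 <= X u) ->
  (forall u, E u -> t <= X u) ->
  \sum_(u | E u) P u <= (\sum_u P u * X u) / t.
Proof.
move=> t_gt0 P_ge0 X_ge0 E_X; rewrite mulr_suml.
apply: (le_trans (y := \sum_(u | E u) P u * X u / t)).
  apply: ler_sum => u /E_X tX.
  by rewrite -mulrA ler_peMr // ler_pdivlMr // mul1r.
rewrite [leRHS](bigID E) /= lerDl.
by apply: sumr_ge0 => u _; rewrite divr_ge0 ?mulr_ge0 // ltW.
Qed.

(* AM-GM with weight [c = t / K]: [2 |y| c <= y^2 + c^2] for each term. *)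
Lemma sum_abs_le_of_sum_sqr (T : finType) (P : pred T) (y : T -> R) (K t : R) :
  0 < t -> 0 < K -> #|P|%:R <= K ->
  \sum_(u | P u) y u ^+ 2 <= t ^+ 2 / K -> \sum_(u | P u) `|y u| <= t.
Proof.
move=> t_gt0 K_gt0 card_le sqr_le; set c := t / K.
have c_gt0 : 0 < c by rewrite divr_gt0.
have amgm u : `|y u| <= (y u ^+ 2 / c + c) / 2.
  rewrite ler_pdivlMr // -(ler_pM2r c_gt0) mulrDl divfK ?gt_eqF //.
  rewrite -real_normK ?num_real //.
  by have := sqr_ge0 (`|y u| - c); move: `|y u| => a; nra.
apply: le_trans (ler_sum _ (fun u _ => amgm u)) _.
rewrite -mulr_suml big_split /= -mulr_suml sumr_const.
have sum_sqr_c : (\sum_(u | P u) y u ^+ 2) / c <= t.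
  by rewrite ler_pdivrMr // (le_trans sqr_le) // /c mulrA expr2.
have card_c : c *+ #|P| <= t.
  rewrite -mulr_natr (le_trans (y := c * K)) ?ler_pM2l //.
  by rewrite /c divfK ?gt_eqF.
lra.
Qed.

End Inequalities.

Lemma card_supp_in (d : nat) (beta : cell d) : (#|supp_in beta| <= 2 ^ weight beta)%N.
Proof.
pose S := {a : 'I_d | beta a}.
pose restrict (g : cell d) : {ffun S -> bool} := [ffun a : S => g (val a)].
have : {in supp_in beta &, injective restrict}.
  move=> g1 g2 /forallP g1_supp /forallP g2_supp eq_restrict.
  apply/ffunP => a; case beta_a : (beta a).
    by have := congr1 (fun h : {ffun S -> bool} => h (exist _ a beta_a)) eq_restrict;
      rewrite !ffunE.
  by move: (g1_supp a) (g2_supp a); rewrite beta_a !implybF => /negbTE -> /negbTE ->.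
move/leq_card_in; rewrite card_ffun card_bool card_sig /weight.
by rewrite (eq_card (B := [set a | beta a])) // => a; rewrite inE.
Qed.

Section RandomizedResponse.
Variables (R : realType) (eps : R).

Definition rr_prob (x b : bool) : R := if b == x then p_r eps else 1 - p_r eps.

Definition debias (b : bool) : R := (b%:R + p_r eps - 1) / (2 * p_r eps - 1).

Definition rr_var : R := p_r eps * (1 - p_r eps) / (2 * p_r eps - 1) ^+ 2.

Let e := expR (eps / 2).

Let one_add_e_gt0 : 0 < 1 + e. Proof. by rewrite addr_gt0 ?expR_gt0. Qed.

Let p_rE : p_r eps = e / (1 + e). Proof. by []. Qed.

Let p_r_complE : 1 - p_r eps = 1 / (1 + e).
Proof. by rewrite p_rE; field; rewrite gt_eqF. Qed.

Lemma rr_prob_ge0 x b : 0 <= rr_prob x b.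
Proof.
rewrite /rr_prob; case: ifP => _; last rewrite p_r_complE.
all: by rewrite divr_ge0 ?ltW ?expR_gt0.
Qed.

Lemma rr_prob_sum1 x : rr_prob x true + rr_prob x false = 1.
Proof. by rewrite /rr_prob; case: x => /=; ring. Qed.

Lemma rr_var_ge0 : 0 <= rr_var.
Proof.
have := rr_prob_ge0 true true; have := rr_prob_ge0 true false.
by rewrite /rr_prob /= => q_ge0 p_ge0; rewrite /rr_var divr_ge0 ?sqr_ge0 ?mulr_ge0.
Qed.

Hypothesis eps_gt0 : 0 < eps.

Let e_gt1 : 1 < e. Proof. by rewrite expR_gt1 divr_gt0. Qed.

Let biasE : 2 * p_r eps - 1 = (e - 1) / (1 + e).
Proof. by rewrite p_rE; field; rewrite gt_eqF. Qed.

Lemma rr_bias_neq0 : 2 * p_r eps - 1 != 0.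
Proof. by rewrite biasE mulf_neq0 ?invr_eq0 ?gt_eqF ?subr_gt0. Qed.

Lemma debias_mean0 x :
  rr_prob x true * (debias true - x%:R) + rr_prob x false * (debias false - x%:R) = 0.
Proof. by have := rr_bias_neq0; rewrite /rr_prob /debias; case: x => /= ?; field. Qed.

Lemma debias_var x :
  rr_prob x true * (debias true - x%:R) ^+ 2
  + rr_prob x false * (debias false - x%:R) ^+ 2 = rr_var.
Proof. by have := rr_bias_neq0; rewrite /rr_prob /debias /rr_var; case: x => /= ?; field. Qed.

Lemma rr_prob_ratio (x y b : bool) :
  rr_prob x b <= (if x == y then 1 else e) * rr_prob y b.
Proof.
have [->|] := eqVneq x y; first by rewrite mul1r.
have p_rM : p_r eps = e * (1 - p_r eps) by rewrite p_r_complE p_rE mul1r.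
have := e_gt1; have := rr_prob_ge0 x (~~ b); rewrite /rr_prob.
by case: x; case: y; case: b => //= *; nra.
Qed.

Hypothesis eps_lt2 : eps < 2.

Lemma rr_var_eps2_le8 : rr_var * eps ^+ 2 <= 8.
Proof.
have rr_varE : rr_var = e / (e - 1) ^+ 2.
  by rewrite /rr_var biasE p_r_complE p_rE; field; rewrite !gt_eqF ?subr_gt0.
set h := eps / 2.
have h_gt0 : 0 < h by rewrite divr_gt0.
have h_lt1 : h < 1 by rewrite ltr_pdivrMr // mul1r.
have h_le : 1 + h <= e := expR_ge1Dx h.
have -> : eps = 2 * h by rewrite /h; field.
rewrite rr_varE mulrAC ler_pdivrMr ?exprn_gt0 ?subr_gt0 //.
have hu : h <= e - 1 by lra.
set u := e - 1 in hu *.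
have -> : e = 1 + u by rewrite /u; ring.
have u_gt0 : 0 < u by lra.
have h2 : h * h <= u * u by nra.
have hhu : h * h * u <= u * u.
  apply: (le_trans (y := h * u * u)); first by rewrite mulrAC ler_pM2l ?mulr_gt0.
  by rewrite -mulrA ler_piMl ?mulr_ge0 ?ltW.
rewrite !expr2; nra.
Qed.

End RandomizedResponse.

Lemma inprs_LDP (R : realType) (d : nat) (eps : R) :
  0 < eps -> is_LDP eps (@inprs_prob R d eps).
Proof.
move=> eps_gt0 j j' o; set e := expR (eps / 2).
have inprs_probE k : inprs_prob eps k o = \prod_l rr_prob eps (l == k) (o l).
  by apply: eq_bigr => l _; rewrite ffunE.
have prod_at k : \prod_(l : cell d) (if l == k then e else 1) = e.
  by rewrite -big_mkcond big_pred1_eq.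
have -> : expR eps = \prod_l ((if l == j then e else 1) * (if l == j' then e else 1)).
  by rewrite big_split /= !prod_at -expRD -splitr.
rewrite !inprs_probE -big_split /=; apply: ler_prod => l _.
rewrite rr_prob_ge0 /=; apply: le_trans (rr_prob_ratio eps_gt0 _ _ _) _.
apply: ler_wpM2r; first exact: rr_prob_ge0.
have e_gt1 : 1 < e by rewrite expR_gt1 divr_gt0.
by rewrite -/e; case: (l == j); case: (l == j') => /=; nra.
Qed.

Section Utility.
Variables (R : realType) (d N : nat) (eps : R).
Variables (js : {ffun 'I_N -> cell d}) (beta : cell d).
Hypotheses (eps_gt0 : 0 < eps) (eps_lt2 : eps < 2) (N_gt0 : (0 < N)%N).
Implicit Types (B : {ffun 'I_N -> {ffun cell d -> bool}}) (p : 'I_N * cell d).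

Definition report_prob p (b : bool) : R := rr_prob eps (Defs.indic (js p.1) p.2) b.

Definition report_noise p (b : bool) : R := debias eps b - (Defs.indic (js p.1) p.2)%:R.

Definition marg_weight (gamma : cell d) p : R := (cand p.2 beta == gamma)%:R / N%:R.

Definition sq_err B : R := \sum_(gamma | supp_in beta gamma)
  (marginal beta (recon eps B) gamma - marginal beta (true_dist R js) gamma) ^+ 2.

Lemma joint_probE B : joint_prob eps js B = prod_prob report_prob B.
Proof.
by rewrite /joint_prob /prod_prob -(pair_bigA _ (fun i l => report_prob (i, l) (B i l))).
Qed.

Lemma marginal_recon_sub B gamma :
  marginal beta (recon eps B) gamma - marginal beta (true_dist R js) gamma
  = \sum_p marg_weight gamma p * report_noise p (B p.1 p.2).
Proof.
rewrite /marginal -sumrB big_mkcond /=.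
rewrite -(pair_bigA _ (fun i eta =>
  marg_weight gamma (i, eta) * report_noise (i, eta) (B i eta))).
rewrite exchange_big /=; apply: eq_bigr => eta _; rewrite !ffunE /marg_weight /=.
case: eqP => _ /=; last by rewrite big1 // => i _; rewrite !mul0r.
rewrite -mulrBl -sumrB mulr_suml; apply: eq_bigr => i _.
by rewrite /report_noise div1r mulrC.
Qed.

Lemma expect_sq_err :
  \sum_B prod_prob report_prob B * sq_err B <= rr_var eps * 2 ^+ d / N%:R.
Proof.
have N_pos : 0 < N%:R :> R by rewrite ltr0n.
have report_sum1 p : report_prob p true + report_prob p false = 1 by exact: rr_prob_sum1.
have noise_mean0 p : report_prob p true * report_noise p true
                     + report_prob p false * report_noise p false = 0 by exact: debias_mean0.
under eq_bigr => B _ do rewrite mulr_sumr.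
rewrite exchange_big /=.
under eq_bigr => g _ do under eq_bigr => B _ do rewrite marginal_recon_sub.
under eq_bigr => g _ do rewrite (expect_sq_lincomb report_sum1 noise_mean0).
under eq_bigr => g _ do under eq_bigr => p _ do rewrite /second_moment debias_var //.
apply: (le_trans (y := \sum_g \sum_p marg_weight g p ^+ 2 * rr_var eps)).
  rewrite [leRHS](bigID (supp_in beta)) /= lerDl.
  by apply: sumr_ge0 => g _; apply: sumr_ge0 => p _; rewrite mulr_ge0 ?sqr_ge0 ?rr_var_ge0.
rewrite exchange_big /=.
(* the report bit [p] only enters the entry [cand p.2 beta] *)
have one_entry p : \sum_g marg_weight g p ^+ 2 * rr_var eps = rr_var eps / N%:R ^+ 2.
  rewrite (bigD1 (cand p.2 beta)) //= big1 ?addr0.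
    by rewrite /marg_weight eqxx expr_div_n expr1n mulrC mul1r.
  by move=> g /negbTE ne; rewrite /marg_weight eq_sym ne mul0r expr0n /= mul0r.
under eq_bigr => p _ do rewrite one_entry.
rewrite sumr_const card_prod card_ord card_ffun card_bool card_ord.
rewrite -[_ *+ _]mulr_natr natrM natrX [leLHS](_ : _ = rr_var eps * 2 ^+ d / N%:R) //.
by field; rewrite gt_eqF.
Qed.

Lemma marg_L1_le_of_sq_err B (t : R) :
  0 < t -> sq_err B <= t ^+ 2 / 2 ^+ weight beta ->
  marg_L1 beta (true_dist R js) (recon eps B) <= t.
Proof.
move=> t_gt0 sq_le; rewrite /marg_L1.
under eq_bigr => g _ do rewrite distrC.
apply: sum_abs_le_of_sum_sqr t_gt0 _ _ sq_le; first by rewrite exprn_gt0.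
by rewrite -natrX ler_nat card_supp_in.
Qed.

Lemma inprs_marg_L1_whp :
  1 / 2 <= Pr eps js (fun B => marg_L1 beta (true_dist R js) (recon eps B)
              <= 4 * Num.sqrt (2 ^+ (d + weight beta)) / (eps * Num.sqrt N%:R)).
Proof.
have N_pos : 0 < N%:R :> R by rewrite ltr0n.
set t := 4 * _ / _; set good := fun B => _ <= t.
have t_gt0 : 0 < t by rewrite divr_gt0 ?mulr_gt0 ?sqrtr_gt0 ?exprn_gt0.
set thr := 16 * 2 ^+ d / (eps ^+ 2 * N%:R).
have thr_gt0 : 0 < thr by rewrite divr_gt0 ?mulr_gt0 ?exprn_gt0.
have t_sqr : t ^+ 2 / 2 ^+ weight beta = thr.
  rewrite /t /thr expr_div_n !exprMn !sqr_sqrtr ?exprn_ge0 ?ler0n // exprD.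
  by field; rewrite !gt_eqF ?exprn_gt0.
have bad_sq_err B : ~~ good B -> thr <= sq_err B.
  apply: contraNle => /ltW; rewrite -t_sqr; exact: marg_L1_le_of_sq_err.
have report_sum1 p : report_prob p true + report_prob p false = 1 by exact: rr_prob_sum1.
have bad_le : \sum_(B | ~~ good B) prod_prob report_prob B <= 1 / 2.
  apply: le_trans (markov_finite thr_gt0 _ _ bad_sq_err) _.
  - by move=> B; apply: prodr_ge0 => p _; apply: rr_prob_ge0.
  - by move=> B; apply: sumr_ge0 => g _; apply: sqr_ge0.
  apply: (le_trans (y := rr_var eps * 2 ^+ d / N%:R / thr)).
    by rewrite ler_pM2r ?invr_gt0 //; apply: expect_sq_err.
  have -> : rr_var eps * 2 ^+ d / N%:R / thr = rr_var eps * eps ^+ 2 / 16.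
    by rewrite /thr; field; rewrite !gt_eqF ?exprn_gt0.
  by have := rr_var_eps2_le8 eps_gt0 eps_lt2; lra.
have := prod_prob_sum1 report_sum1; rewrite (bigID good) /=.
rewrite /Pr (eq_bigr _ (fun B _ => joint_probE B)).
by lra.
Qed.

End Utility.

Theorem theorem2 (R : realType) :
  exists (C : R) (a : nat) (c0 : R), 0 < C /\ 0 < c0 /\
  forall (d N k : nat) (eps : R) (beta : cell d) (js : {ffun 'I_N -> cell d}),
    0 < eps -> eps < 2 -> (0 < N)%N -> weight beta = k ->
    is_LDP eps (@inprs_prob R d eps)
    /\
    c0 <= Pr eps js
      (fun B => marg_L1 beta (true_dist R js) (recon eps B)
                <= C * polylog N d k eps ^+ a
                   * Num.sqrt (2 ^+ (d + k)) / (eps * Num.sqrt N%:R)).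
Proof.
exists 4, 0%N, (1 / 2); split; first lra; split; first lra.
move=> d N k eps beta js eps_gt0 eps_lt2 N_gt0 <-; split; first exact: inprs_LDP.
rewrite expr0 mulr1; exact: inprs_marg_L1_whp.
Qed.
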